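(* Let $T$ be a standard Young tableau with distinct positive integer entries, and let $s$ be an entry of $T$. Let $r<s$ be an integer such that no entry of $T$ lies in the open interval $(r,s)$, and let $k$ be a positive integer with $k\leq s-r$. Choose $k-1$ integers $r<r_1<\cdots<r_{k-1}<s$, and let $T'$ be the tableau obtained from $T$ by column inserting $r_{k-1},r_{k-2},\dots,r_1$ in that order. Then: (1) $c_{T'}(r_i)=i$ for $1\le i\le k-1$, and $c_{T'}(s)=m$, where $m=\max\{c_T(s),k\}$; (2) if $s'$ is an entry of $T$ with $s'>s$, then either $c_{T'}(s')=c_T(s')$ or $c_{T'}(s')\leq m+n$, where $m$ is as in (1) and $n$ is the number of entries of $T$ lying in the half-open interval $[s,s')$.
   Context: For a tableau $T$ and an entry $a$ of $T$, $c_T(a)$ denotes the index of the column of $T$ containing $a$ (columns numbered from $1$ starting on the left). Column insertion of a number $a$ into a tableau: place $a$ in the first column, bumping the smallest entry of that column larger than $a$ (if any); the bumped entry is then inserted into the second column in the same way, and so on, until an entry is placed at the bottom of a column without bumping. *)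

From mathcomp Require Import all_boot all_order all_algebra.
Set Implicit Arguments. Unset Strict Implicit. Unset Printing Implicit Defensive.
Import Order.TTheory GRing.Theory Num.Theory.
Local Open Scope ring_scope.

(* A tableau is the list of its columns (left to right); each column lists
   its entries from top to bottom. *)
Definition tableau := seq (seq int).

Definition entries (T : tableau) : seq int := flatten T.

Definition is_SYT (T : tableau) : Prop :=
  [/\ all (fun c => c != [::]) T,
      sorted geq (map size T),
      all (fun c : seq int => sorted (fun x y : int => x < y) c) T,
      (forall j i : nat, (j.+1 < size T)%N -> (i < size (nth [::] T j.+1))%N ->
          nth 0 (nth [::] T j) i < nth 0 (nth [::] T j.+1) i) &
      uniq (entries T) /\ all (fun x : int => 0 < x) (entries T)].

(* c_T(a): 1-based index of the column of T containing a
   (equals (size T).+1 when a is not an entry). *)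
Definition col_of (T : tableau) (a : int) : nat :=
  (find (fun c => a \in c) T).+1.

Fixpoint col_insert (a : int) (T : tableau) : tableau :=
  match T with
  | [::] => [:: [:: a]]
  | c :: T' =>
      let i := find (fun x => a < x) c in
      if (i < size c)%N then set_nth 0 c i a :: col_insert (nth 0 c i) T'
      else rcons c a :: T'
  end.

Definition col_insert_seq (T : tableau) (s : seq int) : tableau :=
  foldl (fun U a => col_insert a U) T s.

(* Column inserting r_(k-1), ..., r_1 keeps the inserted values on a diagonal:
   once r_j, ..., r_(k-1) are inserted, r_i lies in column i - j + 1.  No entry
   of T lies strictly between r and s, so the next, smaller value r_(j-1) bumps
   r_j out of column 1, which bumps r_(j+1) out of column 2, and so on; only the
   largest inserted value moves on, into the first column past the diagonal.
   There it bumps s if s sits in that column, and otherwise an entry larger than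
   s, which cannot displace s.  Hence s ends in column max(c_T(s), k).  An entry
   s' > s only moves at the end of a bumping chain whose members lie strictly
   between the inserted value and s', i.e. are inserted values or entries of T
   in [s, s'); this bounds the column it reaches. *)

From mathcomp Require Import all_boot all_order all_algebra zify.
Import Order.TTheory GRing.Theory Num.Theory.
Local Open Scope ring_scope.
Set Implicit Arguments. Unset Strict Implicit. Unset Printing Implicit Defensive.

Section OrderedSeq.
Variables (disp : Order.disp_t) (T : orderType disp).

Lemma lt_path_le_last (x : T) s e : path <%O x s -> e \in x :: s -> (e <= last x s)%O.
Proof.
elim: s x e => [|y s IH] x e /=; first by rewrite inE => _ /eqP ->.
case/andP=> lt_xy /IH le_last; rewrite inE => /orP[/eqP ->|/le_last //].
exact: le_trans (ltW lt_xy) (le_last _ (mem_head _ _)).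
Qed.

Lemma lt_path_behead (x y : T) s : path <%O x (y :: s) -> path <%O x s.
Proof. by case/andP=> lt_xy; apply: (path_le (@lt_trans _ T) lt_xy). Qed.

Lemma lt_path_rcons_between (x y : T) s : path <%O x (rcons s y) ->
  {in s, forall e, (x < e < y)%O}.
Proof.
move=> path_xsy e e_s; rewrite (allP (lt_path_min path_xsy)) ?mem_rcons ?inE ?e_s ?orbT //=.
move: path_xsy; rewrite rcons_path => /andP[path_xs lt_last_y].
by apply: le_lt_trans (lt_path_le_last path_xs _) lt_last_y; rewrite inE e_s orbT.
Qed.

Lemma find_sorted_lt (c : seq T) (p : pred T) y :
  sorted <%O c -> y \in c -> p y -> {in c, forall e, (e < y)%O -> ~~ p e} ->
  find p c = index y c.
Proof.
elim: c => [|h c IH] //= sorted_hc; rewrite inE => /predU1P[<- -> _|y_c py noP].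
  by rewrite eqxx.
have lt_hy : (h < y)%O by move/allP: (lt_path_min sorted_hc); apply.
rewrite (negbTE (noP h (mem_head _ _) lt_hy)) (lt_eqF lt_hy) IH //.
- exact: path_sorted sorted_hc.
- by move=> e e_c; apply: noP; rewrite inE e_c orbT.
Qed.

Variable x0 : T.

Lemma sorted_set_nth_find (c : seq T) a :
  sorted <%O c -> a \notin c -> (find (fun x => a < x)%O c < size c)%N ->
  sorted <%O (set_nth x0 c (find (fun x => a < x)%O c) a).
Proof.
elim: c => [|h c IH] //= sorted_hc; rewrite inE negb_or => /andP[a_neq_h a_notin_c].
case: ifP => [lt_ah _ /=|/negbT lt_ha].
  by apply: (path_le (@lt_trans _ T) lt_ah).
move=> /(IH (path_sorted sorted_hc) a_notin_c).
have {}lt_ha : (h < a)%O by rewrite lt_neqAle eq_sym a_neq_h leNgt.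
case: c sorted_hc {IH a_notin_c} => [|h' c] //=; first by rewrite lt_ha.
by case/andP=> lt_hh' _; case: ifP => _ /= ->; rewrite ?lt_ha ?lt_hh'.
Qed.

Lemma sorted_rcons_find (c : seq T) a :
  sorted <%O c -> a \notin c -> (size c <= find (fun x => a < x)%O c)%N ->
  sorted <%O (rcons c a).
Proof.
case: c => [|h c] // sorted_hc a_notin; rewrite leqNgt -has_find => no_gt.
have le_last : (last h c <= a)%O.
  rewrite leNgt; apply: contra no_gt => lt_a_last.
  by apply/hasP; exists (last h c); first exact: mem_last.
rewrite /= rcons_path; apply/andP; split=> //; rewrite lt_neqAle le_last andbT.
by apply: contraNneq a_notin => <-; exact: mem_last.
Qed.

End OrderedSeq.

Lemma perm_set_nth (T : eqType) (x0 : T) (c : seq T) i a : (i < size c)%N ->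
  perm_eq (nth x0 c i :: set_nth x0 c i a) (a :: c).
Proof.
move=> lt_i_c; rewrite set_nthE lt_i_c.
have -> : a :: c = a :: take i c ++ nth x0 c i :: drop i.+1 c.
  by rewrite -drop_nth ?cat_take_drop.
by apply/permP => p /=; rewrite !count_cat /=; lia.
Qed.

Lemma sub_in_count (T : eqType) (a1 a2 : pred T) (s : seq T) :
  {in s, subpred a1 a2} -> (count a1 s <= count a2 s)%N.
Proof.
move=> sub12; rewrite (@eq_in_count _ a1 (predI a1 a2)) ?sub_count // => [x /andP[] //|].
by move=> x /sub12 /=; case: (a1 x) => // ->.
Qed.

Local Notation bump_pos a c := (find (fun x : int => a < x) c).

Lemma lt_nth_bump_pos (c : seq int) a :
  (bump_pos a c < size c)%N -> a < nth 0 c (bump_pos a c).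
Proof. by rewrite -has_find => /(nth_find 0). Qed.

Lemma mem_entries_nth U y j : y \in nth [::] U j -> y \in entries U.
Proof.
move=> y_Uj; apply/flattenP; exists (nth [::] U j) => //; apply: mem_nth.
by rewrite ltnNge; apply: contraL y_Uj => /(nth_default [::]) ->.
Qed.

Lemma mem_nth_col_of U y : y \in entries U -> y \in nth [::] U (col_of U y).-1.
Proof.
move=> /flattenP[c c_U y_c]; apply: (nth_find [::] (a := fun c => y \in c)).
by apply/hasP; exists c.
Qed.

Lemma col_of_nth U y j : uniq (entries U) -> y \in nth [::] U j -> col_of U y = j.+1.
Proof.
rewrite /col_of; elim: U j => [|c U IH] [|j] //= uniqU y_Uj; first by rewrite y_Uj.
move: uniqU; rewrite /entries /= cat_uniq => /and3P[_ disj uniqU].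
have y_U : y \in entries U := mem_entries_nth y_Uj.
rewrite (IH j) //; case: ifP => // y_c.
by case/hasP: disj; exists y.
Qed.

Lemma perm_entries_col_insert a U : perm_eq (entries (col_insert a U)) (a :: entries U).
Proof.
elim: U a => [|c U IH] a //=; rewrite /entries /=; case: ifP => [lt_pos|_].
  have /permP cnt_ins := IH (nth 0 c (bump_pos a c)).
  have /permP cnt_set := perm_set_nth 0 a lt_pos.
  apply/permP => p; move: (cnt_ins p) (cnt_set p); rewrite /entries /= !count_cat /=.
  by move=> -> eq_set; rewrite addnA (addnC (count p _)) eq_set addnA.
by rewrite /= -cats1 -catA perm_catCA.
Qed.

Lemma mem_head_col_insert a U : a \in nth [::] (col_insert a U) 0.
Proof.
case: U => [|c U] /=; first exact: mem_head.
case: ifP => [lt_pos|_] /=; last by rewrite mem_rcons mem_head.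
apply/(nthP 0); exists (bump_pos a c); last by rewrite nth_set_nth /= eqxx.
by rewrite size_set_nth leq_max lt_pos orbT.
Qed.

Lemma mem_col_insert_lt U a z j : z < a ->
  (z \in nth [::] (col_insert a U) j) = (z \in nth [::] U j).
Proof.
elim: U a j => [|c U IH] a j lt_za /=.
  by case: j => [|[]] //=; rewrite inE lt_eqF.
case: ifP => [lt_pos|_]; last by case: j => //=; rewrite mem_rcons inE lt_eqF.
have lt_zb := lt_trans lt_za (lt_nth_bump_pos lt_pos).
case: j => [|j] /=; last exact: IH.
have := perm_mem (perm_set_nth 0 a lt_pos) z.
by rewrite !inE (lt_eqF lt_za) (lt_eqF lt_zb).
Qed.

Lemma col_of_col_insert_lt U a z : z \in entries U -> z < a ->
  col_of (col_insert a U) z = col_of U z.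
Proof.
rewrite /col_of; elim: U a => [|c U IH] a //=; rewrite /entries /= mem_cat => z_in lt_za.
have /= := mem_col_insert_lt (c :: U) 0 lt_za.
case: ifP => [lt_pos|_] /= -> //; case: ifP z_in => //= _ z_U.
by rewrite IH // (lt_trans lt_za (lt_nth_bump_pos lt_pos)).
Qed.

(* The bumping chain that reaches [z] consists of entries strictly between [a]
   and [z]. *)
Lemma col_of_col_insert_gt U a z : z \in entries U -> a < z ->
  col_of (col_insert a U) z = col_of U z \/
  (col_of (col_insert a U) z <= (count (fun y => (a < y < z)%R) (entries U)).+2)%N.
Proof.
elim: U a => [|c U IH] a //=; rewrite {1}/entries /= mem_cat => z_in lt_az.
case: ifP => [lt_pos|_]; last by left; rewrite /col_of /= mem_rcons inE gt_eqF.
set b := nth 0 c _; have lt_ab : a < b := lt_nth_bump_pos lt_pos.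
have := perm_mem (perm_set_nth 0 a lt_pos) z; rewrite -/b !inE (gt_eqF lt_az) /=.
rewrite /col_of /=; case: ifP => _ /=; rewrite ?orbT ?orbF => z_bc.
  by left; rewrite -z_bc.
rewrite -z_bc in z_in *; case: eqP z_in => [z_b _|z_nb /= z_U].
  by right; rewrite z_b; case: (col_insert b U) (mem_head_col_insert b U) => //= ? ? ->.
case: (ltgtP b z) => [lt_bz|lt_zb|b_z]; last by case: z_nb.
- case: (IH b z_U lt_bz) => [eq_col|le_col]; first by left; move: eq_col; rewrite /col_of => ->.
  right.
  rewrite ltnS (leq_trans le_col) // /entries /= count_cat -add1n -addnS leq_add //.
    by rewrite -has_count; apply/hasP; exists b; rewrite ?mem_nth ?lt_ab.
  by apply: sub_count => y /andP[lt_by ->]; rewrite (lt_trans lt_ab lt_by).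
- by left; rewrite -/(col_of _ z) col_of_col_insert_lt.
Qed.

Lemma sorted_col_insert U a : all (sorted <%R) U -> uniq (a :: entries U) ->
  all (sorted <%R) (col_insert a U).
Proof.
elim: U a => [|c U IH] a //= /andP[sorted_c sorted_U].
rewrite /entries /= mem_cat negb_or cat_uniq => /andP[/andP[a_c a_U] /and3P[_ disj uniq_U]].
case: ifP => [lt_pos|ge_pos] /=.
  rewrite sorted_set_nth_find // IH //= uniq_U andbT.
  by apply: contra disj => b_U; apply/hasP; exists (nth 0 c (bump_pos a c)); rewrite ?mem_nth.
by rewrite sorted_rcons_find // ?sorted_U // leqNgt ge_pos.
Qed.

(* Columns are indexed from 0 by [nth], but from 1 by [col_of]. *)
Definition lies_in_columns (ys : seq int) (U : tableau) : Prop :=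
  forall j, (j < size ys)%N -> nth 0 ys j \in nth [::] U j.

(* [x] bumps [ys_0] out of column 0, which bumps [ys_1] out of column 1, and so
   on: only [last x ys] travels beyond column [size ys]. *)
Lemma col_insert_chain x ys U :
  path <%R x ys -> all (sorted <%R) U -> lies_in_columns ys U ->
  {in entries U, forall e, x < e <= last x ys -> e \in ys} ->
  lies_in_columns (x :: ys) (col_insert x U) /\
  drop (size ys) (col_insert x U) = col_insert (last x ys) (drop (size ys) U).
Proof.
elim: ys x U => [|y ys IH] x U path_xys sorted_U ys_U gap_U.
  by split=> [[|j] //= _|]; rewrite ?drop0 ?mem_head_col_insert.
case: U sorted_U ys_U gap_U => [_ /(_ 0%N isT) //|c U].
move=> /andP[sorted_c sorted_U] ys_U gap_U.
have y_c : y \in c := ys_U 0%N isT.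
case/andP: path_xys => lt_xy path_ys.
have le_y_last : y <= last y ys := lt_path_le_last path_ys (mem_head _ _).
have bump_y : bump_pos x c = index y c.
  apply: find_sorted_lt => // e e_c lt_ey; apply/negP => lt_xe.
  have /gap_U : e \in entries (c :: U) by rewrite /entries /= mem_cat e_c.
  rewrite lt_xe (le_trans (ltW lt_ey) le_y_last) inE => /(_ isT) /predU1P[e_y|e_ys].
    by rewrite e_y ltxx in lt_ey.
  by have := allP (lt_path_min path_ys) e e_ys; rewrite ltNge (ltW lt_ey).
have lt_pos : (bump_pos x c < size c)%N by rewrite bump_y index_mem.
have gap_U' : {in entries U, forall e, y < e <= last y ys -> e \in ys}.
  move=> e e_U /andP[lt_ye le_e_last].
  have /gap_U : e \in entries (c :: U) by rewrite /entries /= mem_cat e_U orbT.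
  rewrite (lt_trans lt_xy lt_ye) le_e_last inE => /(_ isT) /predU1P[e_y|//].
  by rewrite e_y ltxx in lt_ye.
have [ys_ins drop_ins] := IH y U path_ys sorted_U (fun j => ys_U j.+1) gap_U'.
rewrite /= lt_pos bump_y nth_index //; split=> // -[_|j /ys_ins //] /=.
apply/(nthP 0); exists (index y c); last by rewrite nth_set_nth /= eqxx.
by rewrite size_set_nth leq_max index_mem y_c orbT.
Qed.

Lemma mem_col_insert_bumped y z c D : sorted <%R c -> z \in c -> y < z ->
  {in c, forall e, y < e -> z <= e} -> z \in nth [::] (col_insert y (c :: D)) 1.
Proof.
move=> sorted_c z_c lt_yz above_y.
have bump_z : bump_pos y c = index z c.
  apply: find_sorted_lt => // e e_c lt_ez; apply/negP => /(above_y e e_c).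
  by rewrite leNgt lt_ez.
by rewrite /= bump_z index_mem z_c nth_index //; exact: mem_head_col_insert.
Qed.

Lemma mem_col_insert_above y z c D j : z \in nth [::] D j ->
  {in c, forall e, y < e -> z < e} -> z \in nth [::] (col_insert y (c :: D)) j.+1.
Proof.
move=> z_Dj above_y /=; case: ifP => [lt_pos|_] //=.
by rewrite mem_col_insert_lt // above_y ?lt_nth_bump_pos ?mem_nth.
Qed.

(* If [z] is not in column 0, the entry bumped from there exceeds [z] (entries
   being distinct), so inserting it further right leaves [z] in place. *)
Lemma mem_col_insert_shift D y z q :
  uniq (entries D) -> all (sorted <%R) D -> z \in nth [::] D q -> y < z ->
  {in entries D, forall e, y < e -> z <= e} ->
  z \in nth [::] (col_insert y D) (maxn q 1).
Proof.
case: D => [|c D]; first by move=> _ _; rewrite nth_nil.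
move=> uniqD /andP[sorted_c _] z_Dq lt_yz above_y.
have above_c : {in c, forall e, y < e -> z <= e}.
  by move=> e e_c; apply: above_y; exact: (@mem_entries_nth _ _ 0).
case: q z_Dq => [|j] /= z_Dq; first exact: mem_col_insert_bumped.
rewrite (maxn_idPl (ltn0Sn j)); apply: mem_col_insert_above => // e e_c lt_ye.
rewrite lt_neqAle above_c // andbT; apply: contraTneq e_c => <-.
apply/negP => z_c; have := col_of_nth uniqD (z_Dq : z \in nth [::] (c :: D) j.+1).
by rewrite (col_of_nth uniqD (z_c : z \in nth [::] (c :: D) 0)).
Qed.

Lemma entries_take_drop n U : entries U = entries (take n U) ++ entries (drop n U).
Proof. by rewrite /entries -flatten_cat cat_take_drop. Qed.

Lemma col_insert_seq_rev_cons T x rs :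
  col_insert_seq T (rev (x :: rs)) = col_insert x (col_insert_seq T (rev rs)).
Proof. by rewrite /col_insert_seq rev_cons foldl_rcons. Qed.

Lemma perm_entries_col_insert_seq T rs :
  perm_eq (entries (col_insert_seq T (rev rs))) (rs ++ entries T).
Proof.
elim: rs => [|x rs IH] //=; rewrite col_insert_seq_rev_cons.
by apply: perm_trans (perm_entries_col_insert _ _) _; rewrite perm_cons.
Qed.

Section InsertBelowGap.
Variables (T : tableau) (r s : int).
Hypothesis gapT : forall x, x \in entries T -> ~~ ((r < x) && (x < s)).

Local Notation ins rs := (col_insert_seq T (rev rs)).

Lemma ins_entries_gap rs : {in entries (ins rs), forall e, r < e < s -> e \in rs}.
Proof.
move=> e; rewrite (perm_mem (perm_entries_col_insert_seq T rs)) mem_cat.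
by case/orP=> [//|/gapT/negPf ->].
Qed.

Lemma col_of_ins_gt rs s' : path <%R r (rcons rs s) -> s' \in entries T -> s < s' ->
  col_of (ins rs) s' = col_of T s' \/
  (col_of (ins rs) s' <= (size rs).+1 + count (fun x => (s <= x < s')%R) (entries T))%N.
Proof.
move=> + s'_T lt_ss'; elim: rs => [_|x rs IH path_xrs]; first by left.
have /andP[lt_rx lt_xs] := lt_path_rcons_between path_xrs (mem_head x rs).
rewrite col_insert_seq_rev_cons.
have s'_ins : s' \in entries (ins rs).
  by rewrite (perm_mem (perm_entries_col_insert_seq T rs)) mem_cat s'_T orbT.
case: (col_of_col_insert_gt s'_ins (lt_trans lt_xs lt_ss')) => [->|le_col].
  case: (IH (lt_path_behead path_xrs)) => [|le_IH]; first by left.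
  by right; rewrite (leq_trans le_IH) // leq_add2r.
right; apply: (leq_trans le_col).
rewrite (permP (perm_entries_col_insert_seq T rs)) count_cat !addSn !ltnS.
apply: leq_add; first exact: count_size.
apply: sub_in_count => e e_T /andP[lt_xe ->]; rewrite andbT leNgt.
by apply: contra (gapT e_T) => lt_es; rewrite (lt_trans lt_rx lt_xe).
Qed.

Hypotheses (uniqT : uniq (entries T)) (sortedT : all (sorted <%R) T).

Lemma uniq_ins rs : path <%R r (rcons rs s) -> uniq (entries (ins rs)).
Proof.
move=> path_rs; rewrite (perm_uniq (perm_entries_col_insert_seq T rs)) cat_uniq uniqT andbT.
have := lt_sorted_uniq (path_sorted path_rs); rewrite rcons_uniq => /andP[_ -> /=].
apply/hasP => -[e /gapT/negP out_e /(lt_path_rcons_between path_rs)].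
exact: out_e.
Qed.

Lemma ins_chain_gap x rs : path <%R r (rcons (x :: rs) s) ->
  {in entries (ins rs), forall e, x < e <= last x rs -> e \in rs}.
Proof.
move=> path_xrs e e_ins /andP[lt_xe le_e_last]; apply: ins_entries_gap e_ins _.
move: path_xrs => /= /andP[lt_rx]; rewrite rcons_path => /andP[_ lt_last_s].
by rewrite (lt_trans lt_rx lt_xe) (le_lt_trans le_e_last lt_last_s).
Qed.

Lemma ins_above_gap rs y : r <= y -> {in rs, forall e, e <= y} ->
  {in entries (ins rs), forall e, y < e -> s <= e}.
Proof.
move=> le_ry le_rs_y e e_ins lt_ye; rewrite leNgt; apply/negP => lt_es.
have /le_rs_y : e \in rs by rewrite (ins_entries_gap e_ins) // lt_es (le_lt_trans le_ry lt_ye).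
by rewrite leNgt lt_ye.
Qed.

Lemma sorted_ins rs : path <%R r (rcons rs s) -> all (sorted <%R) (ins rs).
Proof.
elim: rs => [_|x rs IH path_xrs]; first exact: sortedT.
rewrite col_insert_seq_rev_cons; apply: sorted_col_insert.
  exact/IH/(lt_path_behead path_xrs).
by rewrite -(perm_uniq (perm_entries_col_insert _ _)) -col_insert_seq_rev_cons uniq_ins.
Qed.

Lemma lies_in_columns_ins rs : path <%R r (rcons rs s) -> lies_in_columns rs (ins rs).
Proof.
elim: rs => [_ []//|x rs IH path_xrs]; have path_rs := lt_path_behead path_xrs.
move: (path_xrs) => /= /andP[_]; rewrite rcons_path => /andP[path_x_rs _].
rewrite col_insert_seq_rev_cons.
exact: (col_insert_chain path_x_rs (sorted_ins path_rs) (IH path_rs) (ins_chain_gap path_xrs)).1.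
Qed.

Lemma mem_nth_ins_s rs : s \in entries T -> path <%R r (rcons rs s) ->
  s \in nth [::] (ins rs) (maxn (col_of T s).-1 (size rs)).
Proof.
move=> sT; elim: rs => [_|x rs IH path_xrs]; first by rewrite maxn0 mem_nth_col_of.
have path_rs := lt_path_behead path_xrs.
move: (path_xrs) => /= /andP[lt_rx]; rewrite rcons_path => /andP[path_x_rs lt_last_s].
have le_last e : e \in x :: rs -> e <= last x rs := lt_path_le_last path_x_rs.
have [_ drop_ins] := col_insert_chain path_x_rs (sorted_ins path_rs)
  (lies_in_columns_ins path_rs) (ins_chain_gap path_xrs).
set l := size rs; set q := (col_of T s).-1.
have -> : maxn q (size (x :: rs)) = l + maxn (maxn q l - l) 1 by rewrite /= /l; lia.
rewrite col_insert_seq_rev_cons -nth_drop drop_ins.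
have split_ins := entries_take_drop l (ins rs).
apply: mem_col_insert_shift => //.
- by move: (uniq_ins path_rs); rewrite split_ins cat_uniq => /and3P[].
- by apply/allP => d /mem_drop; apply/allP/sorted_ins.
- by rewrite nth_drop subnKC ?leq_maxr // IH.
- move=> e e_drop; apply: (@ins_above_gap rs).
  + exact: le_trans (ltW lt_rx) (le_last _ (mem_head _ _)).
  + by move=> e' e'_rs; rewrite le_last // inE e'_rs orbT.
  + by rewrite split_ins mem_cat e_drop orbT.
Qed.

End InsertBelowGap.

Theorem lemma2p3 (T : tableau) (s r : int) (k : nat) (rs : seq int) :
  is_SYT T ->
  s \in entries T ->
  r < s ->
  (forall x, x \in entries T -> ~~ ((r < x) && (x < s))) ->
  (0 < k)%N ->
  (k%:Z <= s - r) ->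
  size rs = k.-1 ->
  path (fun x y : int => x < y) r (rcons rs s) ->
  let T' := col_insert_seq T (rev rs) in
  let m := maxn (col_of T s) k in
  ((forall i : nat, (1 <= i <= k.-1)%N ->
      nth 0 rs i.-1 \in entries T' /\ col_of T' (nth 0 rs i.-1) = i)
   /\ col_of T' s = m)
  /\
  (forall s' : int, s' \in entries T -> s < s' ->
      let n := count (fun x => (s <= x) && (x < s')) (entries T) in
      col_of T' s' = col_of T s' \/ (col_of T' s' <= m + n)%N).
Proof.
(* Of [is_SYT T] only distinct entries and increasing columns are needed, and
   [r < s], [k <= s - r] already follow from the chain [r < rs < s]. *)
move=> [_ _ sortedT _ [uniqT _]] sT _ gapT k_gt0 _ size_rs path_rs T' m.
have uniqT' : uniq (entries T') := uniq_ins gapT uniqT path_rs.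
have k_eq : k = (size rs).+1 by rewrite size_rs prednK.
split; [split|].
- move=> i /andP[i_gt0 le_ik]; have lt_i : (i.-1 < size rs)%N by rewrite size_rs; lia.
  have rs_i := lies_in_columns_ins gapT uniqT sortedT path_rs lt_i.
  by rewrite (mem_entries_nth rs_i) (col_of_nth uniqT' rs_i) prednK.
- have s_T' := mem_nth_ins_s gapT uniqT sortedT sT path_rs.
  have col_pos : (0 < col_of T s)%N by [].
  by rewrite (col_of_nth uniqT' s_T') /m k_eq; lia.
- move=> s' s'_T lt_ss' n.
  case: (col_of_ins_gt gapT path_rs s'_T lt_ss') => [|le_col]; [by left | right].
  by rewrite (leq_trans le_col) // /m /n leq_add2r k_eq leq_maxr.
Qed.
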